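(* Let $C=w-w-\dots-w$ be a chain with $m\ge 2$ edges all having the same weight $w>0$. Then $C$ is extremal, i.e. $L_1(C)=L_\emptyset(C)$.
   Context: For a chain $C'=v_1-\dots-v_r$ with $r\ge 2$ edges and positive weights: $L_1(C')=\max\{\sum_{i=1}^r v_ix_i : x\in\mathbb{R}^r,\ x_i^2+x_{i+1}^2\le 1\ \forall\,1\le i\le r-1\}$; the bare length is $L_\emptyset(C')=\sqrt{(\sum_{i\text{ odd}}v_i)^2+(\sum_{i\text{ even}}v_i)^2}$; $C'$ is extremal if $L_1(C')=L_\emptyset(C')$. *)

From HB Require Import structures.
From mathcomp Require Import all_boot all_order all_algebra.
From mathcomp Require Import boolp classical_sets reals.
Set Implicit Arguments. Unset Strict Implicit. Unset Printing Implicit Defensive.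
Import Order.TTheory GRing.Theory Num.Theory.
Local Open Scope ring_scope.
Local Open Scope classical_set_scope.

(* A chain v_1 - ... - v_r with r weights, encoded as v : 'I_r -> R
   (0-based: v i is the paper's v_{i+1}). *)

Definition chain_feasible (R : realType) (r : nat) (x : 'I_r -> R) : Prop :=
  forall i j : 'I_r, val j = (val i).+1 -> x i ^+ 2 + x j ^+ 2 <= 1.

(* L_1(C') = max { sum_i v_i x_i : x feasible }, taken as the supremum
   (the feasible set is compact, so the max exists and equals the sup). *)
Definition L1 (R : realType) (r : nat) (v : 'I_r -> R) : R :=
  sup [set s | exists x : 'I_r -> R, chain_feasible x /\ s = \sum_(i < r) v i * x i].

(* Bare length: sqrt((sum of odd-indexed v_i)^2 + (sum of even-indexed v_i)^2),
   1-based odd indices i correspond to 0-based even indices. *)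
Definition Lbare (R : realType) (r : nat) (v : 'I_r -> R) : R :=
  Num.sqrt ((\sum_(i < r | ~~ odd i) v i) ^+ 2 + (\sum_(i < r | odd i) v i) ^+ 2).

Definition extremal (R : realType) (r : nat) (v : 'I_r -> R) : Prop :=
  L1 v = Lbare v.

(* For constant weight [w], L_∅ = w N with N = sqrt (a^2 + b^2), where a and b
   count the even and odd (0-based) positions.  The alternating point with
   x_i = a / N at even i and b / N at odd i is feasible and attains w N.
   Conversely, let S_e and S_o be the sums of x_i^2 over even and odd positions
   of a feasible x; chaining the constraints gives b S_e + a S_o <= a b.
   Summing 2 c N x_i <= N^2 x_i^2 + c^2 over the even positions with c = a and
   over the odd ones with c = b, and weighting these by b and a, gives
   2 a b N (sum x_i) <= N^2 (b S_e + a S_o) + a b N^2 <= 2 a b N^2. *)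

From mathcomp Require Import all_boot all_order all_algebra.
From mathcomp Require Import classical_sets reals.
From mathcomp Require Import lra.
Set Implicit Arguments. Unset Strict Implicit. Unset Printing Implicit Defensive.
Import Order.TTheory GRing.Theory Num.Theory.
Local Open Scope ring_scope.

Section ParitySums.
Variable R : realType.

Lemma sum_even_const n (c : R) : \sum_(0 <= i < n | ~~ odd i) c = c *+ uphalf n.
Proof.
elim: n => [|n IH]; first by rewrite big_geq.
rewrite big_mkcond big_nat_recr //= -big_mkcond IH uphalf_half.
by case: (odd n); rewrite /= ?addr0 // mulrS addrC.
Qed.

Lemma sum_odd_const n (c : R) : \sum_(0 <= i < n | odd i) c = c *+ n./2.
Proof.
elim: n => [|n IH]; first by rewrite big_geq.
rewrite big_mkcond big_nat_recr //= -big_mkcond IH uphalf_half.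
by case: (odd n); rewrite /= ?addr0 // mulrS addrC.
Qed.

Lemma sum_split_parity n (F : nat -> R) :
  \sum_(0 <= i < n) F i = \sum_(0 <= i < n | ~~ odd i) F i + \sum_(0 <= i < n | odd i) F i.
Proof. by rewrite (bigID odd) addrC. Qed.

Definition unit_chain_length n : R := Num.sqrt ((uphalf n)%:R ^+ 2 + (n./2)%:R ^+ 2).

Lemma unit_chain_length_gt0 n : (0 < n)%N -> 0 < unit_chain_length n.
Proof.
move=> n_gt0; rewrite sqrtr_gt0 ltr_pwDl ?sqr_ge0 // exprn_gt0 // ltr0n.
by rewrite uphalf_gt0.
Qed.

Lemma unit_chain_lengthE n : unit_chain_length n ^+ 2 = (uphalf n)%:R ^+ 2 + (n./2)%:R ^+ 2.
Proof. by rewrite sqr_sqrtr // addr_ge0 ?sqr_ge0. Qed.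

End ParitySums.

Section FeasibleSequences.
Variables (R : realType) (y : nat -> R).

Definition feasible_seq n := forall i, (i.+1 < n)%N -> y i ^+ 2 + y i.+1 ^+ 2 <= 1.

Lemma feasible_seq_le m n : (m <= n)%N -> feasible_seq n -> feasible_seq m.
Proof. by move=> le_mn yn i lt_im; apply: yn; apply: leq_trans le_mn. Qed.

Lemma sum_sqr_double_le k : feasible_seq k.*2 -> \sum_(0 <= i < k.*2) y i ^+ 2 <= k%:R.
Proof.
elim: k => [|k IH] yk; first by rewrite big_geq.
have yk' : feasible_seq k.*2 by apply: feasible_seq_le yk; rewrite leq_double.
move: yk; rewrite doubleS => yk.
rewrite !big_nat_recr //= -natr1.
have := IH yk'; have := yk k.*2 (leqnn _); lra.
Qed.

Lemma sum_sqr_odd_le k : feasible_seq k.*2.+1 ->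
  k%:R * \sum_(0 <= i < k.*2.+1) y i ^+ 2 + \sum_(0 <= i < k.*2.+1 | odd i) y i ^+ 2
  <= k%:R * k.+1%:R.
Proof.
elim: k => [|k IH] yk.
  by rewrite !mul0r add0r big_mkcond big_nat1.
have yk' : feasible_seq k.*2.+1 by apply: feasible_seq_le yk; rewrite ltnS leq_double.
move: yk; rewrite doubleS => yk.
have pairs : \sum_(0 <= i < k.*2.+2) y i ^+ 2 <= k.+1%:R.
  by apply: (@sum_sqr_double_le k.+1); apply: feasible_seq_le yk; rewrite doubleS.
have last_pair := yk k.*2.+1 (leqnn _).
have IHk := IH yk'.
have sum_all : \sum_(0 <= i < k.*2.+3) y i ^+ 2
    = \sum_(0 <= i < k.*2.+2) y i ^+ 2 + y k.*2.+2 ^+ 2.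
  by rewrite big_nat_recr.
have sum_pairs : \sum_(0 <= i < k.*2.+2) y i ^+ 2
    = \sum_(0 <= i < k.*2.+1) y i ^+ 2 + y k.*2.+1 ^+ 2.
  by rewrite big_nat_recr.
have sum_odd : \sum_(0 <= i < k.*2.+3 | odd i) y i ^+ 2
    = \sum_(0 <= i < k.*2.+1 | odd i) y i ^+ 2 + y k.*2.+1 ^+ 2.
  by rewrite big_mkcond big_nat_recr // big_nat_recr //= -big_mkcond odd_double addr0.
rewrite sum_all sum_odd sum_pairs in pairs *; rewrite -!natr1.
have k_ge0 : 0 <= k%:R :> R by [].
nra.
Qed.

Lemma sum_sqr_parity_le n : feasible_seq n ->
  (n./2)%:R * \sum_(0 <= i < n | ~~ odd i) y i ^+ 2
  + (uphalf n)%:R * \sum_(0 <= i < n | odd i) y i ^+ 2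
  <= (uphalf n)%:R * (n./2)%:R.
Proof.
rewrite -(odd_double_half n); set k := n./2; clearbody k.
case: (odd n) => /= [|] yn.
- rewrite add1n in yn *; rewrite /= uphalf_double doubleK.
  have := sum_sqr_odd_le yn; rewrite sum_split_parity -natr1; lra.
- rewrite add0n uphalf_double doubleK -mulrDr -sum_split_parity ler_wpM2l //.
  exact: sum_sqr_double_le.
Qed.

Lemma sum_le_unit_chain_length n : (2 <= n)%N -> feasible_seq n ->
  \sum_(0 <= i < n) y i <= unit_chain_length R n.
Proof.
move=> n_ge2 yn; set N := unit_chain_length R n.
set a : R := (uphalf n)%:R; set b : R := (n./2)%:R.
have a_gt0 : 0 < a by rewrite ltr0n uphalf_gt0 ltnW.
have b_gt0 : 0 < b by rewrite ltr0n half_gt0.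
have N_gt0 : 0 < N by rewrite unit_chain_length_gt0 // ltnW.
have N2 : N ^+ 2 = a ^+ 2 + b ^+ 2 by rewrite unit_chain_lengthE.
have tangent P c : 2 * c * N * \sum_(0 <= i < n | P i) y i
    <= N ^+ 2 * \sum_(0 <= i < n | P i) y i ^+ 2 + \sum_(0 <= i < n | P i) c ^+ 2.
  rewrite !mulr_sumr -big_split /=; apply: ler_sum => i _.
  have := sqr_ge0 (N * y i - c); lra.
have even_part := tangent (fun i => ~~ odd i) a.
have odd_part := tangent odd b.
rewrite sum_even_const -[a ^+ 2 *+ _]mulr_natr -/a in even_part.
rewrite sum_odd_const -[b ^+ 2 *+ _]mulr_natr -/b in odd_part.
have weighted := sum_sqr_parity_le yn; rewrite -/a -/b in weighted.
rewrite sum_split_parity.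
set se := \sum_(0 <= i < n | ~~ odd i) y i in even_part *.
set so := \sum_(0 <= i < n | odd i) y i in odd_part *.
set SE := \sum_(0 <= i < n | ~~ odd i) y i ^+ 2 in even_part weighted.
set SO := \sum_(0 <= i < n | odd i) y i ^+ 2 in odd_part weighted.
have even_b : b * (2 * a * N * se) <= b * (N ^+ 2 * SE + a ^+ 2 * a) by rewrite ler_pM2l.
have odd_a : a * (2 * b * N * so) <= a * (N ^+ 2 * SO + b ^+ 2 * b) by rewrite ler_pM2l.
have weighted_N : N ^+ 2 * (b * SE + a * SO) <= N ^+ 2 * (a * b) by rewrite ler_pM2l ?exprn_gt0.
have N2_ab : a * b * (a ^+ 2 + b ^+ 2) = a * b * N ^+ 2 by rewrite N2.
have abN_gt0 : 0 < 2 * a * b * N by rewrite !mulr_gt0.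
rewrite -(ler_pM2l abN_gt0); lra.
Qed.

End FeasibleSequences.

Lemma sup_attained (R : realType) (E : set R) x : E x -> ubound E x -> sup E = x.
Proof.
move=> Ex ubx; apply/le_anti; rewrite ge_sup //=; last by exists x.
exact: ub_le_sup (ex_intro _ x ubx) _ Ex.
Qed.

Section OrdinalChains.
Variables (R : realType) (n : nat).

Definition nat_ext (x : 'I_n -> R) (i : nat) : R :=
  if insub i is Some j then x j else 0.

Lemma sum_nat_ext (x : 'I_n -> R) : \sum_(0 <= i < n) nat_ext x i = \sum_(i < n) x i.
Proof. by rewrite big_mkord; apply: eq_bigr => i _; rewrite /nat_ext valK. Qed.

Lemma feasible_nat_ext (x : 'I_n -> R) : chain_feasible x -> feasible_seq (nat_ext x) n.
Proof.
move=> xf i lt_i1n; have lt_in := ltnW lt_i1n.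
rewrite /nat_ext (insubT (fun k => k < n)%N lt_in) (insubT (fun k => k < n)%N lt_i1n).
exact: xf.
Qed.

Lemma sum_le_unit_chain_length_ord (x : 'I_n -> R) : (2 <= n)%N -> chain_feasible x ->
  \sum_(i < n) x i <= unit_chain_length R n.
Proof.
move=> n_ge2 /feasible_nat_ext xf; rewrite -sum_nat_ext.
exact: sum_le_unit_chain_length.
Qed.

Definition alternating (p q : R) (i : 'I_n) : R := if odd i then q else p.

Lemma alternating_feasible p q : p ^+ 2 + q ^+ 2 <= 1 -> chain_feasible (alternating p q).
Proof. by move=> pq i j ij; rewrite /alternating ij /=; case: (odd i); rewrite // addrC. Qed.

Lemma sum_alternating p q :
  \sum_(i < n) alternating p q i = p * (uphalf n)%:R + q * (n./2)%:R.
Proof.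
rewrite -(big_mkord xpredT (fun i => if odd i then q else p)) sum_split_parity.
rewrite (eq_bigr (fun=> p)); last by move=> i /negbTE ->.
rewrite [X in _ + X](eq_bigr (fun=> q)); last by move=> i ->.
by rewrite sum_even_const sum_odd_const !mulr_natr.
Qed.

Lemma Lbare_const c : 0 <= c -> Lbare (fun _ : 'I_n => c) = c * unit_chain_length R n.
Proof.
move=> c_ge0; rewrite /Lbare -(big_mkord (fun i => ~~ odd i) (fun=> c)).
rewrite -(big_mkord odd (fun=> c)) sum_even_const sum_odd_const.
rewrite -[c *+ uphalf n]mulr_natr -[c *+ n./2]mulr_natr !exprMn -mulrDr sqrtrM ?sqr_ge0 //.
by rewrite sqrtr_sqr ger0_norm.
Qed.

Lemma L1_const c : (2 <= n)%N -> 0 < c -> L1 (fun _ : 'I_n => c) = c * unit_chain_length R n.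
Proof.
move=> n_ge2 c_gt0; set N := unit_chain_length R n.
set a : R := (uphalf n)%:R; set b : R := (n./2)%:R.
have N_neq0 : N != 0 by rewrite gt_eqF // unit_chain_length_gt0 // ltnW.
apply: sup_attained.
  exists (alternating (a / N) (b / N)); split.
    apply: alternating_feasible.
    by rewrite !expr_div_n -mulrDl -unit_chain_lengthE mulfV // expf_neq0.
  rewrite -mulr_sumr sum_alternating; congr (c * _).
  by rewrite (mulrAC a) (mulrAC b) -!expr2 -mulrDl -unit_chain_lengthE expr2 mulfK.
move=> _ [x [xf ->]]; rewrite -mulr_sumr ler_pM2l //.
exact: sum_le_unit_chain_length_ord.
Qed.

End OrdinalChains.

Theorem mainTheorem11 (R : realType) (m : nat) (w : R) :
  (2 <= m)%N -> 0 < w -> extremal (fun _ : 'I_m => w).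
Proof.
move=> m_ge2 w_gt0.
by rewrite /extremal L1_const // Lbare_const // ltW.
Qed.
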